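(* Let $h,k$ be integers with $k>0$, $\gcd(h,k)=1$ and $h+k$ odd. Then $$B_{1}(h,k)=2(1-h)\bigl(s(h,k)-2s(h+k,2k)\bigr).$$
   Context: $[x]$ denotes the greatest integer $\le x$, and $((x))=x-[x]-\tfrac12$ if $x\notin\mathbb{Z}$, $((x))=0$ if $x\in\mathbb{Z}$. For integers $a,b$ with $b>0$: the Dedekind sum is $s(a,b)=\sum_{j=1}^{b-1}\left(\left(\frac{aj}{b}\right)\right)\left(\left(\frac{j}{b}\right)\right)$, and (for $\gcd(a,b)=1$) $$B_{1}(a,b)=\sum_{j=1}^{b-1}(-1)^{j+\left[\frac{aj}{b}\right]}\left[\frac{aj}{b}\right].$$ *)

From mathcomp Require Import all_boot all_order all_algebra.
Set Implicit Arguments. Unset Strict Implicit. Unset Printing Implicit Defensive.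
Import Order.TTheory GRing.Theory Num.Theory.
Local Open Scope ring_scope.

Definition gint (x : rat) : int := Num.floor x.

Definition sawtooth (x : rat) : rat :=
  if x \is a Num.int then 0 else x - (gint x)%:~R - 1 / 2.

Definition dedekind_sum (a b : int) : rat :=
  \sum_(1 <= j < `|b|%N)
    sawtooth ((a * j%:Z)%:~R / b%:~R) * sawtooth ((j%:Z)%:~R / b%:~R).

Definition B1 (a b : int) : rat :=
  \sum_(1 <= j < `|b|%N)
    let f := gint ((a * j%:Z)%:~R / b%:~R) in
    ((-1 : rat) ^ (j%:Z + f)) * f%:~R.

From mathcomp Require Import all_boot all_order all_algebra.
From mathcomp Require Import ring lra zify.

(* Write h j = f k + r with 0 < r < k, and f + j = 2 m + e with e in {0, 1}.  The j-th
   summands of B1(h,k), s(h,k) and s(h+k,2k) are then explicit in f, r, j, e; moreover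
   s(h+k,2k) is symmetric under j |-> 2k - j, hence twice a sum over 1 <= j < k.  For the
   index k - j the data become h - 1 - f and k - r, with the same parity e because h + k
   is odd.  Substituting, the j-th and (k-j)-th terms of
   B1(h,k) - 2(1-h)(s(h,k) - 2 s(h+k,2k)) cancel in pairs. *)

Set Implicit Arguments.
Unset Strict Implicit.
Unset Printing Implicit Defensive.

Import Order.TTheory GRing.Theory Num.Theory.
Local Open Scope ring_scope.

Lemma gint_intrD (m : int) (t : rat) : 0 < t < 1 -> gint (m%:~R + t) = m.
Proof. by case/andP=> t0 t1; apply: floor_def; rewrite intrD lerDl ltW //= ltrD2l. Qed.

Lemma sawtooth_intrD (m : int) (t : rat) : 0 < t < 1 ->
  sawtooth (m%:~R + t) = t - 1 / 2.
Proof.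
move=> t01; have /andP[t0 t1] := t01.
rewrite /sawtooth intrEfloor -/(gint _) gint_intrD //.
have -> : (m%:~R == m%:~R + t) = false by apply/negbTE/eqP; lra.
by rewrite /=; ring.
Qed.

Lemma floorN_notint (R : archiRealFieldType) (x : R) : x \isn't a Num.int ->
  Num.floor (- x) = - Num.floor x - 1.
Proof. by move=> xNZ; rewrite floorNceil opprK ceil_floor (negbTE xNZ) /=; ring. Qed.

Lemma sawtooth_intrB (m : int) (x : rat) : sawtooth (m%:~R - x) = - sawtooth x.
Proof.
rewrite /sawtooth; case: (boolP (x \is a Num.int)) => [xZ | xNZ].
  by rewrite rpredB ?intr_int // oppr0.
have -> : (m%:~R - x) \is a Num.int = false.
  apply/negbTE; apply: contra xNZ => mxZ.
  by rewrite -[x](subKr m%:~R) rpredB ?intr_int.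
rewrite /gint floorDzr ?intr_int ?rpredN // intrKfloor floorN_notint //.
rewrite !intrD !intrN /=; lra.
Qed.

Section DivisionData.

Variables a b q r : int.
Hypothesis a_div : a = q * b + r.
Hypothesis r_bounds : 0 < r < b.

Let quotient_fracE : (a%:~R / b%:~R : rat) = q%:~R + r%:~R / b%:~R.
Proof.
have b0 : (b%:~R : rat) != 0 by rewrite intr_eq0; lia.
by rewrite a_div intrD intrM; field.
Qed.

Let remainder_frac_bounds : 0 < (r%:~R / b%:~R : rat) < 1.
Proof.
have /andP[r0 rb] := r_bounds.
have b0 : (0 : rat) < b%:~R by rewrite ltr0z; lia.
by rewrite divr_gt0 ?ltr0z ?ltr_pdivrMr ?mul1r ?ltr_int //; lia.
Qed.

Lemma gint_divz : gint (a%:~R / b%:~R) = q.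
Proof. by rewrite quotient_fracE gint_intrD. Qed.

Lemma sawtooth_divz : sawtooth (a%:~R / b%:~R) = r%:~R / b%:~R - 1 / 2.
Proof. by rewrite quotient_fracE sawtooth_intrD. Qed.

End DivisionData.

Definition dedekind_term (a b : int) (j : nat) : rat :=
  sawtooth ((a * j%:Z)%:~R / b%:~R) * sawtooth ((j%:Z)%:~R / b%:~R).

Definition B1_term (a b : int) (j : nat) : rat :=
  let f := gint ((a * j%:Z)%:~R / b%:~R) in ((-1 : rat) ^ (j%:Z + f)) * f%:~R.

Lemma dedekind_sumE (a b : int) :
  dedekind_sum a b = \sum_(1 <= j < `|b|%N) dedekind_term a b j.
Proof. by []. Qed.

Lemma B1E (a b : int) : B1 a b = \sum_(1 <= j < `|b|%N) B1_term a b j.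
Proof. by []. Qed.

Section Summands.

Variables (a b q r : int) (j : nat).
Hypothesis aj_div : a * j%:Z = q * b + r.
Hypothesis r_bounds : 0 < r < b.
Hypothesis j_bounds : (0 < j)%N && (j%:Z < b).

Lemma dedekind_termE :
  dedekind_term a b j = (r%:~R / b%:~R - 1 / 2) * (j%:R / b%:~R - 1 / 2).
Proof.
rewrite /dedekind_term (sawtooth_divz aj_div r_bounds).
by rewrite (@sawtooth_divz j b 0 j) ?mul0r ?add0r //; lia.
Qed.

Lemma B1_termE : B1_term a b j = (-1) ^ (j%:Z + q) * q%:~R.
Proof. by rewrite /B1_term (gint_divz aj_div r_bounds). Qed.

End Summands.

Lemma sign_parity (m e : int) : (e = 0 \/ e = 1) ->
  (-1 : rat) ^ (2 * m + e) = 1 - 2 * e%:~R.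
Proof.
have u : (-1 : rat) \is a GRing.unit by rewrite unitrN unitr1.
rewrite exprzDr // -exprz_exp.
have -> : (-1 : rat) ^ (2 : int) = 1 by rewrite -exprnP sqrrN expr1n.
by rewrite exp1rz mul1r; case=> ->; rewrite ?expr0z ?expr1z /=; lra.
Qed.

Lemma coprimez_mul_modz_gt0 (h : int) (n j : nat) : gcdz h n = 1 ->
  (0 < j < n)%N -> 0 < (h * j %% n)%Z.
Proof.
move=> hn_coprime /andP[j0 jn].
rewrite lt_neqAle modz_ge0 ?andbT; last by apply/eqP; lia.
apply/eqP=> /esym/dvdz_mod0P.
rewrite Gauss_dvdzr; last by rewrite /coprimez gcdzC hn_coprime.
by rewrite dvdzE /= => /dvdn_leq; lia.
Qed.

Lemma big_nat_antisym (R : numDomainType) (n : nat) (F : nat -> R) :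
  (forall j, (0 < j < n)%N -> F j + F (n - j)%N = 0) -> \sum_(1 <= j < n) F j = 0.
Proof.
move=> F_antisym.
have sum_rev : \sum_(1 <= j < n) F (n - j)%N = \sum_(1 <= j < n) F j.
  rewrite [RHS]big_nat_rev; apply: eq_big_nat => i _.
  by rewrite add1n subSS.
suff /eqP : (\sum_(1 <= j < n) F j) *+ 2 = 0 by rewrite mulrn_eq0 => /eqP.
rewrite mulr2n -[X in _ + X]sum_rev -big_split /=.
by rewrite big1_seq // => j /andP[_]; rewrite mem_index_iota => /F_antisym.
Qed.

Lemma big_nat_double_sym (V : zmodType) (n : nat) (F : nat -> V) : F n = 0 ->
  (forall i, (i <= 2 * n)%N -> F (2 * n - i)%N = F i) ->
  \sum_(1 <= j < (2 * n)%N) F j = (\sum_(1 <= j < n) F j) *+ 2.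
Proof.
move=> F_mid F_sym; case: n F_mid F_sym => [|n] F_mid F_sym; first by rewrite !big_geq ?mul0rn.
rewrite (big_cat_nat _ (n := n.+1)) //=; last by lia.
rewrite (big_ltn (m := n.+1)); last by lia.
rewrite F_mid add0r mulr2n; congr (_ + _).
rewrite big_nat_rev -[n.+2]add1n big_addn; have -> : (2 * n.+1 - n.+1 = n.+1)%N by lia.
apply: eq_big_nat => i /andP[i1 iln].
have -> : (1 + n.+1 + 2 * n.+1 - (i + n.+1).+1 = 2 * n.+1 - i)%N by lia.
by apply: F_sym; lia.
Qed.

Lemma dedekind_term_reflect (a : int) (b i : nat) : (0 < b)%N -> (i <= b)%N ->
  dedekind_term a b (b - i) = dedekind_term a b i.
Proof.
move=> b0 ib; have b0' : (b%:R : rat) != 0 by rewrite pnatr_eq0; lia.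
rewrite /dedekind_term -(subzn ib) mulrBr !intrB !intrM /=.
have -> : (a%:~R * b%:R - a%:~R * i%:R) / b%:R = a%:~R - (a%:~R * i%:R) / b%:R :> rat.
  by field.
have -> : (b%:R - i%:R) / b%:R = 1%:~R - i%:R / b%:R :> rat by rewrite /=; field.
by rewrite !sawtooth_intrB mulrNN.
Qed.

Lemma dedekind_term_half (a : int) (n : nat) : (0 < n)%N ->
  dedekind_term a (2 * n%:Z) n = 0.
Proof.
move=> n0; rewrite /dedekind_term (@sawtooth_divz n (2 * n%:Z) 0 n) ?mul0r ?add0r //; last by lia.
have n0' : (n%:R : rat) != 0 by rewrite pnatr_eq0; lia.
by rewrite intrM /= [_ / _ - _](_ : _ = 0) ?mulr0 //; field.
Qed.

Lemma dedekind_sum_double (a : int) (n : nat) :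
  dedekind_sum a (2 * n%:Z) = (\sum_(1 <= j < n) dedekind_term a (2 * n%:Z) j) *+ 2.
Proof.
case: n => [|n]; first by rewrite dedekind_sumE !big_geq ?mul0rn.
rewrite dedekind_sumE -PoszM absz_nat.
apply: big_nat_double_sym; first exact: dedekind_term_half.
by move=> i ib; rewrite dedekind_term_reflect.
Qed.

Definition B1_defect (h : int) (n j : nat) : rat :=
  B1_term h n j
  - 2 * (1 - h%:~R) * (dedekind_term h n j - 2 * (2 * dedekind_term (h + n) (2 * n%:Z) j)).

Lemma B1_defectE (h f r m e : int) (n j : nat) : (0 < j < n)%N ->
  h * j%:Z = f * n%:Z + r -> 0 < r < n%:Z -> f + j%:Z = 2 * m + e -> (e = 0 \/ e = 1) ->
  B1_defect h n j =
    (1 - 2 * e%:~R) * f%:~R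
    - 2 * (1 - h%:~R) * ((r%:~R / n%:R - 1 / 2) * (j%:R / n%:R - 1 / 2)
       - 4 * (((e%:~R * n%:R + r%:~R) / (2 * n%:R) - 1 / 2) * (j%:R / (2 * n%:R) - 1 / 2))).
Proof.
move=> /andP[j0 jn] hj_div r_bounds fj_parity e01.
have j_bounds : (0 < j)%N && (j%:Z < n) by rewrite j0 /=; lia.
have hnj_div : (h + n) * j%:Z = m * (2 * n%:Z) + (e * n + r) by nia.
have hnj_rem_bounds : 0 < e * n + r < 2 * n%:Z by case: e01 => ->; lia.
have j_bounds2 : (0 < j)%N && (j%:Z < 2 * n) by rewrite j0 /=; lia.
rewrite /B1_defect (B1_termE hj_div) // (dedekind_termE hj_div) //.
rewrite (dedekind_termE hnj_div) // [j%:Z + f]addrC fj_parity sign_parity //.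
have n0 : (n%:R : rat) != 0 by rewrite pnatr_eq0; lia.
by rewrite !intrD !intrM /=; field.
Qed.

Lemma B1_defect_pair (h : int) (n j : nat) : gcdz h n = 1 -> odd `|h + n| ->
  (0 < j < n)%N -> B1_defect h n j + B1_defect h n (n - j)%N = 0.
Proof.
move=> hn_coprime hn_odd j_bounds.
have r0 := coprimez_mul_modz_gt0 hn_coprime j_bounds.
move: j_bounds => /andP[j0 jn]; have jn' : (0 < n - j < n)%N by lia.
set f := (h * j %/ n)%Z in r0 *; set r := (h * j %% n)%Z in r0 *.
have hj_div : h * j%:Z = f * n%:Z + r by rewrite /f /r -divz_eq.
have rn : r < n%:Z by rewrite /r ltz_pmod //; lia.
set m := ((f + j) %/ 2)%Z; set e := ((f + j) %% 2)%Z.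
have fj_parity : f + j%:Z = 2 * m + e by rewrite /m /e; lia.
have e01 : e = 0 \/ e = 1 by rewrite /e; lia.
have [p hn_p] : exists p, h + n%:Z = 2 * p + 1 by exists ((h + n) %/ 2)%Z; lia.
clearbody f r m e.
have hj'_div : h * (n - j)%N%:Z = (h - 1 - f) * n%:Z + (n%:Z - r).
  by rewrite -subzn ?(ltnW jn) // mulrBr hj_div; ring.
have fj'_parity : (h - 1 - f) + (n - j)%N%:Z = 2 * (p - m - e) + e.
  by rewrite -subzn ?(ltnW jn) //; lia.
have r_bounds : 0 < r < n%:Z by rewrite r0.
have r'_bounds : 0 < n%:Z - r < n%:Z by lia.
rewrite (B1_defectE _ hj_div r_bounds fj_parity e01) ?j0 //.
rewrite (B1_defectE jn' hj'_div r'_bounds fj'_parity e01).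
have n0 : (n%:R : rat) != 0 by rewrite pnatr_eq0; lia.
by rewrite natrB ?(ltnW jn) // !intrB /=; case: e01 => ->; field.
Qed.

Theorem theorem19 (h k : int) :
  0 < k -> gcdz h k = 1 -> odd (absz (h + k)) ->
  B1 h k = 2 * (1 - h%:~R) * (dedekind_sum h k - 2 * dedekind_sum (h + k) (2 * k)).
Proof.
case: k => [n|n] //= _ hn_coprime hn_odd.
have := big_nat_antisym (fun j => B1_defect_pair (j := j) hn_coprime hn_odd).
rewrite /B1_defect sumrB -mulr_sumr sumrB -!mulr_sumr.
rewrite B1E dedekind_sumE dedekind_sum_double mulr2n /=.
lra.
Qed.
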